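(* Let $\Lambda$ be a finite or countable alphabet and $\mu$ a shift-invariant probability measure on $\Lambda^{\mathbb N}$ such that $(\Lambda^{\mathbb N},\mu,\sigma)$ is mixing of all orders but $\mu$ is not a Bernoulli (i.i.d. product) measure. Then there exist $k\ge2$, a block $B\in\Lambda^k$ and a vector $\bar p_0\in\mathbb N_0^{k-1}$ such that $\mu([B^{\bar q}])<\mu([B^{\bar p_0}])$ for all $\bar q\in\mathbb N_0^{k-1}$ with $\bar q\succ\bar p_0$.
   Context: For $B=(b_1,\dots,b_k)$ and $\bar p=(p_1,\dots,p_{k-1})\in\mathbb N_0^{k-1}$, $B^{\bar p}=(b_1,*^{p_1},b_2,*^{p_2},\dots,b_{k-1},*^{p_{k-1}},b_k)$, and $[B^{\bar p}]$ is the set of $z\in\Lambda^{\mathbb N}$ with $z_{n_i}=b_i$ for $i=1,\dots,k$, where $n_i=i+p_1+\dots+p_{i-1}$ (other coordinates arbitrary). On $\mathbb N_0^{k-1}$, $\bar p\prec\bar q$ means $p_i\le q_i$ for all $i$ with strict inequality for at least one $i$. Mixing of all orders: for all measurable $A_0,\dots,A_k$, $\mu(A_0\cap\sigma^{-n_1}A_1\cap\sigma^{-n_1-n_2}A_2\cap\dots\cap\sigma^{-n_1-\dots-n_k}A_k)\to\mu(A_0)\cdots\mu(A_k)$ as $n_1,\dots,n_k\to\infty$. A Bernoulli measure satisfies $\mu([b_1\dots b_k])=\mu([b_1])\cdots\mu([b_k])$ for all blocks. *)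

From mathcomp Require Import all_boot all_algebra.
From mathcomp Require Import all_classical all_reals all_analysis.
Set Implicit Arguments. Unset Strict Implicit. Unset Printing Implicit Defensive.
Import GRing.Theory Num.Theory.
Local Open Scope classical_set_scope.
Local Open Scope ring_scope.

(* Single-coordinate cylinders {z | z n = a}; since the alphabet is
   countable (with discrete sigma-algebra) they generate the product
   sigma-algebra on L^N. *)
Definition coord_cylinders (L : Type) : set (set (nat -> L)) :=
  [set A | exists (n : nat) (a : L), A = [set z | z n = a]].

Definition seqSpace (L : pointedType) := g_sigma_algebraType (@coord_cylinders L).

Definition shiftn (L : Type) (m : nat) (z : nat -> L) : nat -> L :=
  fun t => z (t + m)%N.

Definition shift_invariant (L : pointedType) (R : realType)
  (mu : probability (seqSpace L) R) : Prop :=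
  forall A : set (seqSpace L), measurable A -> mu (shiftn 1 @^-1` A) = mu A.

(* Mixing of all orders: for all k and measurable A_0..A_k,
   mu(A_0 ∩ σ^{-n_1}A_1 ∩ ... ∩ σ^{-(n_1+...+n_k)}A_k) -> prod mu(A_i)
   as n_1,...,n_k -> oo (jointly).  Here the gaps n_1..n_k are n 0 .. n (k-1). *)
Definition mixing_all_orders (L : pointedType) (R : realType)
  (mu : probability (seqSpace L) R) : Prop :=
  forall (k : nat) (A : nat -> set (seqSpace L)),
    (forall i, (i <= k)%N -> measurable (A i)) ->
    forall eps : R, 0 < eps -> exists N : nat, forall n : nat -> nat,
      (forall j, (j < k)%N -> (N <= n j)%N) ->
      `| fine (mu (\bigcap_(i in `I_k.+1)
                    (shiftn (\sum_(j < i) n j)%N @^-1` A i)))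
         - \prod_(i < k.+1) fine (mu (A i)) | < eps.

Definition cyl (L : pointedType) (b : seq L) : set (seqSpace L) :=
  [set z | [seq z i | i <- iota 0 (size b)] = b].

Definition bernoulli_measure (L : pointedType) (R : realType)
  (mu : probability (seqSpace L) R) : Prop :=
  forall b : seq L, fine (mu (cyl b)) = \prod_(x <- b) fine (mu (cyl [:: x])).

Definition gcyl (L : pointedType) (B : seq L) (p : seq nat) : set (seqSpace L) :=
  [set z | [seq z (i + \sum_(j < i) nth 0%N p j)%N | i <- iota 0 (size B)] = B].

Definition vprec (p q : seq nat) : Prop :=
  size p = size q /\
  (forall i, (i < size p)%N -> (nth 0 p i <= nth 0 q i)%N) /\
  (exists i, (i < size p)%N /\ (nth 0 p i < nth 0 q i)%N).

From mathcomp Require Import all_boot all_order all_algebra.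
From mathcomp Require Import all_classical all_reals all_analysis.
From mathcomp Require Import lra zify.
Import GRing.Theory Num.Theory Order.TTheory.
Set Implicit Arguments. Unset Strict Implicit. Unset Printing Implicit Defensive.
Local Open Scope classical_set_scope.
Local Open Scope ring_scope.

(* If mu is not Bernoulli, take the least k for which some cylinder with k letters at
   increasing positions has a measure different from the product of its one-letter
   marginals.  Summing over the last letter shows that some such cylinder lies strictly
   above the product, and shift invariance turns it into a gapped cylinder [B^p].  If no
   gap vector were a strict local maximum of q |-> mu [B^q] above p, one could climb from
   p along a chain of strictly increasing gap vectors with nondecreasing measure.  Along
   the chain some gaps diverge while the others freeze; the diverging gaps cut B into
   shorter blocks, which are independent by minimality of k, so mixing of all orders
   drives mu [B^q] to the product of the one-letter marginals, below mu [B^p]. *)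

Section Blocks.
Variable S : pred nat.

(* Cutting a word after every gap j with S j, letter i falls into block number block i. *)
Definition block (i : nat) : nat := (\sum_(j < i) S j)%N.

Lemma block0 : block 0 = 0%N.
Proof. by rewrite /block big_ord0. Qed.

Lemma blockS i : block i.+1 = (block i + S i)%N.
Proof. by rewrite /block big_ord_recr. Qed.

Lemma block_homo : {homo block : i j / (i <= j)%N}.
Proof. by apply: (homo_leq leqnn leq_trans) => i; rewrite blockS leq_addr. Qed.

Lemma block_ltE j i : S j -> (j < i)%N = (block j < block i)%N.
Proof.
move=> Sj; apply/idP/idP => [ji|].
  by rewrite (leq_trans _ (block_homo ji)) // blockS Sj addn1.
by apply: contraTT; rewrite -!leqNgt => /block_homo.
Qed.

Lemma block_surj K c : (c < block K)%N -> exists j, [/\ (j < K)%N, S j & block j = c].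
Proof.
elim: K => [|K IH]; first by rewrite block0.
rewrite blockS; case: (ltnP c (block K)) => [/IH [j [jK Sj <-]] _|cK cKS].
  by exists j; split => //; apply: ltnW.
case SK: (S K) cKS => /= cKS; last by lia.
by exists K; split => //; lia.
Qed.

(* Enlarging each gap j of a K-gap vector by d j moves block c to the right by
   block_offset c and separates blocks c and c.+1 by an extra block_gap c. *)
Variables (K : nat) (d : nat -> nat).

Definition block_offset (c : nat) : nat := (\sum_(j < K | S j && (block j < c)) d j)%N.

Definition block_gap (c : nat) : nat := (\sum_(j < K | S j && (block j == c)) d j)%N.

Lemma sum_block_gap c : (\sum_(b < c) block_gap b)%N = block_offset c.
Proof.
elim: c => [|c IH]; first by rewrite big_ord0 /block_offset big_pred0 // => j; rewrite andbF.
rewrite big_ord_recr /= IH /block_offset /block_gap.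
rewrite [in RHS](bigID (fun j : 'I_K => block j < c)%N) /=.
by congr (_ + _)%N; apply: eq_bigl => j; case: (S j); rewrite //= ltnS; case: ltngtP.
Qed.

Lemma leq_block_gap N c : (forall j, (j < K)%N -> S j -> (N <= d j)%N) ->
  (c < block K)%N -> (N <= block_gap c)%N.
Proof.
move=> dN /block_surj [j [jK Sj bj]].
by rewrite /block_gap (bigD1 (Ordinal jK)) /= ?Sj ?bj ?eqxx // (leq_trans (dN j jK Sj)) ?leq_addr.
Qed.

Lemma sum_block_offset i : (forall j, (j < K)%N -> ~~ S j -> d j = 0%N) -> (i <= K)%N ->
  (\sum_(j < i) d j)%N = block_offset (block i).
Proof.
move=> d0 iK; transitivity (\sum_(j < i | S j) d j)%N.
  rewrite [RHS]big_mkcond; apply: eq_bigr => j _; case: ifP => // /negbT.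
  by apply: d0; apply: leq_trans iK.
rewrite (big_ord_widen_cond K S d iK) /block_offset; apply: eq_bigl => j.
by case: (boolP (S j)) => //= Sj; apply: block_ltE.
Qed.

End Blocks.

Lemma prod_partition (R : comPzRingType) (cl : nat -> nat) k M (F : nat -> R) :
  (forall i, (i < k)%N -> (cl i < M)%N) ->
  \prod_(c < M) \prod_(i < k | cl i == c) F i = \prod_(i < k) F i.
Proof.
move=> clM; under eq_bigr do rewrite big_mkcond /=.
rewrite exchange_big /=; apply: eq_bigr => i _.
by rewrite -big_mkcond /= (big_pred1 (Ordinal (clM i (ltn_ord i)))).
Qed.

Lemma sum_pred_lt k (P : pred nat) : (exists2 i, (i < k)%N & ~~ P i) -> (\sum_(i < k) P i < k)%N.
Proof.
move=> [i ik nPi]; rewrite (bigD1 (Ordinal ik)) //= (negbTE nPi) add0n.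
apply: (@leq_ltn_trans (\sum_(j < k | j != Ordinal ik) 1)%N).
  by apply: leq_sum => j _; case: (P j).
by rewrite sum1_card cardC1 card_ord; lia.
Qed.

Lemma eventually_forall_ltn K (P : nat -> nat -> Prop) :
  (forall j, (j < K)%N -> exists N, forall n, (N <= n)%N -> P j n) ->
  exists N, forall n, (N <= n)%N -> forall j, (j < K)%N -> P j n.
Proof.
elim: K => [|K IH] evP; first by exists 0%N.
have [N1 PN1] := IH (fun j jK => evP j (ltnW jK)).
have [N2 PN2] := evP K (ltnSn K).
exists (maxn N1 N2) => n; rewrite geq_max => /andP[n1 n2] j.
by rewrite ltnS leq_eqVlt => /orP[/eqP->|jK]; [apply: PN2|apply: PN1].
Qed.

Lemma bounded_homo_stable (u : nat -> nat) M :
  {homo u : m n / (m <= n)%N} -> (forall n, (u n <= M)%N) ->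
  exists N, forall n, (N <= n)%N -> u n = u N.
Proof.
move=> u_homo uM.
have ex_gap : exists m, `[< exists n, (M - u n)%N = m >].
  by exists (M - u 0)%N; apply/asboolP; exists 0%N.
case: (ex_minnP ex_gap) => m /asboolP [N <-] minN; exists N => n Nn.
have /minN : `[< exists n', (M - u n')%N = (M - u n)%N >] by apply/asboolP; exists n.
have := u_homo _ _ Nn; have := uM n; lia.
Qed.

Lemma vprec_chain_split K (t : nat -> seq nat) :
  (forall n, size (t n) = K) -> (forall n, vprec (t n) (t n.+1)) ->
  exists n0 (S : pred nat), [/\ exists2 j, (j < K)%N & S j,
    forall j n, (j < K)%N -> ~~ S j -> (n0 <= n)%N -> nth 0%N (t n) j = nth 0%N (t n0) j &
    forall M, exists2 n, (n0 <= n)%N &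
      forall j, (j < K)%N -> S j -> (M + nth 0%N (t n0) j <= nth 0%N (t n) j)%N].
Proof.
move=> tK tt.
pose u j n := nth 0%N (t n) j.
have u_homo j : (j < K)%N -> {homo u j : m n / (m <= n)%N}.
  move=> jK; apply: (homo_leq leqnn leq_trans) => n.
  by have [_ [+ _]] := tt n; apply; rewrite tK.
pose S j := `[< forall M, exists n, (M <= u j n)%N >].
have [n0 stable] : exists n0, forall n, (n0 <= n)%N -> forall j, (j < K)%N ->
    ~~ S j -> forall n', (n <= n')%N -> u j n' = u j n.
  apply: eventually_forall_ltn => j jK; case: (boolP (S j)) => [Sj|/asboolPn].
    by exists 0%N => n _ /negP.
  move=> /existsNP [M /forallNP Mu].
  have uM n : (u j n <= M)%N by rewrite leqNgt; apply/negP => /ltnW; apply: Mu.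
  have [N uN] := bounded_homo_stable (u_homo j jK) uM.
  by exists N => n Nn _ n' nn'; rewrite (uN n') ?(uN n) // (leq_trans Nn nn').
have {}stable := stable n0 (leqnn n0).
exists n0, S; split.
- have [_ [_ [i [+ lt]]]] := tt n0; rewrite tK => iK; exists i => //.
  apply/negPn/negP => nSi; move: lt; rewrite -/(u i n0) -/(u i n0.+1).
  by rewrite (stable i iK nSi n0.+1 (leqnSn n0)) ltnn.
- by move=> j n jK nSj; apply: stable.
move=> M; have [N uN] : exists N, forall n, (N <= n)%N -> forall j, (j < K)%N ->
    S j -> (M + u j n0 <= u j n)%N.
  apply: eventually_forall_ltn => j jK.
  case: (boolP (S j)) => [/asboolP/(_ (M + u j n0)%N) [n Mn]|nSj].
    by exists n => n' nn' _; apply: leq_trans Mn (u_homo j jK _ _ nn').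
  by exists 0%N => n _ Sj; case/negP: nSj.
by exists (maxn n0 N); [rewrite leq_maxl|move=> j jK Sj; apply: uN; rewrite ?leq_maxr].
Qed.

Lemma vprec_chain (d : Order.disp_t) (T : porderType d) K (g : seq nat -> T) (p : seq nat) :
  size p = K ->
  (forall p0, size p0 = K -> exists q, [/\ size q = K, vprec p0 q & (g p0 <= g q)%O]) ->
  exists t : nat -> seq nat, [/\ forall n, size (t n) = K,
    forall n, vprec (t n) (t n.+1) & forall n, (g p <= g (t n))%O].
Proof.
move=> pK next.
have [nxt nxtP] : {nxt : seq nat -> seq nat & forall p0, size p0 = K ->
    [/\ size (nxt p0) = K, vprec p0 (nxt p0) & (g p0 <= g (nxt p0))%O]}.
  apply: (@choice _ _ (fun p0 q => size p0 = K ->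
    [/\ size q = K, vprec p0 q & (g p0 <= g q)%O])) => p0.
  by have [/next [q qP]|p0K] := pselect (size p0 = K); [exists q|exists p0].
have tK n : size (iter n nxt p) = K by elim: n => //= n IH; case: (nxtP _ IH).
exists (fun n => iter n nxt p); split => // n; first by case: (nxtP _ (tK n)).
by elim: n => //= n IH; apply: le_trans IH _; case: (nxtP _ (tK n)).
Qed.

Definition gpos (q : seq nat) (i : nat) : nat := (i + \sum_(j < i) nth 0%N q j)%N.

Lemma gpos0 q : gpos q 0 = 0%N.
Proof. by rewrite /gpos big_ord0. Qed.

Lemma gposS q i : gpos q i.+1 = (gpos q i + (nth 0%N q i).+1)%N.
Proof. rewrite /gpos big_ord_recr /=; lia. Qed.

Lemma gpos_homo q : {homo gpos q : i j / (i < j)%N}.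
Proof. by apply: (homo_ltn ltn_trans) => i; rewrite gposS; lia. Qed.

Section Cylinders.
Variable L : pointedType.

Definition cyl_at (K : nat) (f : nat -> nat) (b : nat -> L) : set (seqSpace L) :=
  [set z | forall i, (i < K)%N -> z (f i) = b i].

Definition cyl_at_pred (K : nat) (P : pred nat) (f : nat -> nat) (b : nat -> L) :
  set (seqSpace L) := [set z | forall i, (i < K)%N -> P i -> z (f i) = b i].

Lemma measurable_coord n (a : L) : measurable ([set z | z n = a] : set (seqSpace L)).
Proof. by apply: sub_sigma_algebra; exists n, a. Qed.

Lemma cyl_at_predS K P f b : cyl_at_pred K.+1 P f b =
  cyl_at_pred K P f b `&` (if P K then [set z | z (f K) = b K] else setT).
Proof.
apply/seteqP; split=> z /=.
  move=> zK; split; first by move=> i /ltnW; apply: zK.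
  by case: ifP => // PK; apply: zK.
move=> [zK zfK] i; rewrite ltnS leq_eqVlt => /orP[/eqP->|/zK//].
by move=> PK; move: zfK; rewrite PK.
Qed.

Lemma measurable_cyl_at_pred K P f b : measurable (cyl_at_pred K P f b).
Proof.
elim: K => [|K IH].
  by rewrite (_ : cyl_at_pred _ _ _ _ = setT) //; apply/seteqP; split=> z.
by rewrite cyl_at_predS; apply: measurableI => //; case: (P K) => //; apply: measurable_coord.
Qed.

Lemma cyl_at_predT K f b : cyl_at K f b = cyl_at_pred K predT f b.
Proof. by apply/seteqP; split=> z /= zK i iK => [_|]; apply: zK. Qed.

Lemma measurable_cyl_at K f b : measurable (cyl_at K f b).
Proof. by rewrite cyl_at_predT; apply: measurable_cyl_at_pred. Qed.

Lemma cyl_at0 f b : cyl_at 0 f b = setT.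
Proof. by apply/seteqP; split=> z. Qed.

Lemma cyl_atS K f b : cyl_at K.+1 f b = cyl_at K f b `&` [set z | z (f K) = b K].
Proof. by rewrite !cyl_at_predT cyl_at_predS. Qed.

Lemma eq_cyl_at K f f' b b' :
  {in gtn K, f =1 f'} -> {in gtn K, b =1 b'} -> cyl_at K f b = cyl_at K f' b'.
Proof.
move=> ff' bb'; apply/seteqP; split=> z /= zK i iK.
  by rewrite -ff' -?bb' ?zK.
by rewrite ff' ?bb' ?zK.
Qed.

Lemma cyl_as_cyl_at (B : seq L) : cyl B = cyl_at (size B) id (nth point B).
Proof.
apply/seteqP; split=> z /=.
  by move=> <- i; rewrite size_map size_iota => iB; rewrite (nth_map 0%N) ?size_iota ?nth_iota.
move=> zB; apply: (@eq_from_nth _ point); rewrite size_map size_iota // => i iB.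
by rewrite (nth_map 0%N) ?size_iota // nth_iota // zB.
Qed.

Lemma gcyl_as_cyl_at (B : seq L) q : gcyl B q = cyl_at (size B) (gpos q) (nth point B).
Proof.
apply/seteqP; split=> z /=.
  move=> <- i; rewrite size_map size_iota => iB.
  by rewrite (nth_map 0%N) ?size_iota // nth_iota // add0n.
move=> zB; apply: (@eq_from_nth _ point); rewrite size_map size_iota // => i iB.
by rewrite (nth_map 0%N) ?size_iota // nth_iota // add0n zB.
Qed.

Lemma shiftn_cyl_at m K f b :
  shiftn m @^-1` cyl_at K f b = cyl_at K (fun i => f i + m)%N b.
Proof. by []. Qed.

Lemma shiftn0 : shiftn 0 = id :> (seqSpace L -> seqSpace L).
Proof. by apply/funext => z; apply/funext => t; rewrite /shiftn addn0. Qed.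

Lemma shiftnS m : shiftn m.+1 = shiftn m \o shiftn 1 :> (seqSpace L -> seqSpace L).
Proof. by apply/funext => z; apply/funext => t; rewrite /shiftn /= addn1 addnS. Qed.

Lemma measurable_shiftn m : measurable_fun setT (shiftn m : seqSpace L -> seqSpace L).
Proof.
apply: (@measurability _ _ (seqSpace L) (seqSpace L) setT (shiftn m) (@coord_cylinders L))
  => // _ [_ [n [a ->]] <-].
by rewrite setTI; apply: (measurable_coord (n + m) a).
Qed.

Lemma gpos_gaps k f i : {in gtn k &, {homo f : i j / (i < j)%N}} -> (i < k)%N ->
  (gpos (mkseq (fun j => f j.+1 - f j - 1) k.-1) i + f 0 = f i)%N.
Proof.
move=> f_homo; elim: i => [|i IH] ik; first by rewrite gpos0.
have fi : (f i < f i.+1)%N by apply: f_homo; rewrite ?inE // ltnW.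
rewrite gposS nth_mkseq; last by case: (k) ik.
by have := IH (ltnW ik); lia.
Qed.

Lemma gcyl_gaps k f (b : nat -> L) : {in gtn k &, {homo f : i j / (i < j)%N}} ->
  shiftn (f 0%N) @^-1` gcyl (mkseq b k) (mkseq (fun j => f j.+1 - f j - 1)%N k.-1) =
  cyl_at k f b.
Proof.
move=> f_homo; rewrite gcyl_as_cyl_at size_mkseq shiftn_cyl_at.
by apply: eq_cyl_at => i; rewrite inE => ik; rewrite ?gpos_gaps ?nth_mkseq.
Qed.

Lemma cyl_at_pred_compress (R : comPzRingType) K (P : pred nat) f (b : nat -> L) :
  {in gtn K &, {homo f : i j / (i < j)%N}} ->
  exists (x : nat -> nat) (c : nat -> L),
  [/\ {in gtn (\sum_(i < K) P i)%N &, {homo x : i j / (i < j)%N}},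
      cyl_at_pred K P f b = cyl_at (\sum_(i < K) P i)%N x c,
      forall F : L -> R, \prod_(i < K | P i) F (b i) = \prod_(j < \sum_(i < K) P i) F (c j) &
      forall j, (j < \sum_(i < K) P i)%N -> exists2 i, (i < K)%N & x j = f i].
Proof.
elim: K => [|K IH] f_homo.
  exists id, (fun _ => point); rewrite big_ord0; split => //.
  - by apply/seteqP; split=> z.
  - by move=> F; rewrite !big_ord0.
have [|x [c [x_homo E Pr Ox]]] := IH; first by apply: sub_in2 f_homo => i; rewrite !inE => /ltnW.
rewrite big_ord_recr /=; set n := (\sum_(i < K) P i)%N in x_homo E Pr Ox *.
case PK: (P K) => /=.
- exists (fun j => if j == n then f K else x j), (fun j => if j == n then b K else c j).
  rewrite addn1; split.
  + move=> i j; rewrite !inE ltnS => i_le_n j_le_n ij.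
    have i_lt_n : (i < n)%N by apply: leq_trans ij j_le_n.
    rewrite (ltn_eqF i_lt_n); case: eqP => [_|/eqP jn]; last first.
      by apply: x_homo; rewrite ?inE // ltn_neqAle jn.
    by have [i' i'K ->] := Ox i i_lt_n; apply: f_homo; rewrite ?inE ?ltnS // ltnW.
  + rewrite cyl_at_predS PK cyl_atS E eqxx; congr (_ `&` _).
    by apply: eq_cyl_at => i; rewrite inE => /ltn_eqF ->.
  + move=> F; rewrite [LHS]big_mkcond big_ord_recr /= PK -big_mkcond Pr big_ord_recr /= eqxx.
    by congr (_ * _); apply: eq_bigr => i _; rewrite (ltn_eqF (ltn_ord i)).
  + move=> j; rewrite ltnS leq_eqVlt => /orP[/eqP->|jn]; first by exists K; rewrite ?eqxx.
    by rewrite (ltn_eqF jn); have [i iK ->] := Ox j jn; exists i => //; apply: ltnW.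
- exists x, c; rewrite addn0; split => //.
  + by rewrite cyl_at_predS PK setIT.
  + by move=> F; rewrite [LHS]big_mkcond big_ord_recr /= PK mulr1 -big_mkcond.
  + by move=> j /Ox [i iK ->]; exists i => //; apply: ltnW.
Qed.

End Cylinders.

Section Measure.
Variables (R : realType) (L : pointedType) (mu : probability (seqSpace L) R).

Definition mu1 (a : L) : R := fine (mu (cyl [:: a])).

Definition indep_below (k : nat) : Prop := forall K f (b : nat -> L), (K < k)%N ->
  {in gtn K &, {homo f : i j / (i < j)%N}} ->
  fine (mu (cyl_at K f b)) = \prod_(i < K) mu1 (b i).

Lemma probability_fineK (A : set (seqSpace L)) : measurable A -> (fine (mu A))%:E = mu A.
Proof. by move=> mA; rewrite fineK // fin_num_measure. Qed.

Lemma mu1_ge0 a : 0 <= mu1 a.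
Proof. exact/fine_ge0/measure_ge0. Qed.

Section ShiftInvariant.
Hypothesis mu_shift : shift_invariant mu.

Lemma shiftn_invariant m (A : set (seqSpace L)) : measurable A -> mu (shiftn m @^-1` A) = mu A.
Proof.
elim: m A => [|m IH] A mA; first by rewrite shiftn0.
have mAm : measurable (shiftn m @^-1` A : set (seqSpace L)).
  by have := measurable_shiftn m measurableT mA; rewrite setTI.
by rewrite shiftnS comp_preimage mu_shift // IH.
Qed.

Lemma mu_cyl_at1 f b : fine (mu (cyl_at 1 f b)) = mu1 (b 0%N).
Proof.
rewrite /mu1 cyl_as_cyl_at -[in RHS](shiftn_invariant (f 0%N)); last exact: measurable_cyl_at.
rewrite shiftn_cyl_at; congr (fine (mu _)).
by apply: eq_cyl_at => i; rewrite inE ltnS leqn0 => /eqP ->.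
Qed.

Hypothesis L_countable : countable [set: L].

Lemma measure_coordC_le (E : set (seqSpace L)) n (a0 : L) (c : R) :
  measurable E -> 0 <= c ->
  (forall a, a <> a0 -> (mu (E `&` [set z | z n = a]) <= c%:E * mu [set z | z n = a])%E) ->
  (mu (E `\` [set z | z n = a0]) <= c%:E * mu (~` [set z : seqSpace L | z n = a0]))%E.
Proof.
move: L_countable => /countable_injP [phi phi_inj] mE c_ge0 Ec.
(* The complement of the coordinate set is the countable disjoint union of the H i. *)
pose H i := [set z : seqSpace L | z n <> a0 /\ phi (z n) = i].
have HE i : H i = set0 \/ exists2 a, a <> a0 & H i = [set z | z n = a].
  have [[a a_a0 phia]|none] := pselect (exists2 a, a <> a0 & phi a = i); last first.
    by left; apply/seteqP; split=> z //= [za0 phiz]; apply: none; exists (z n).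
  right; exists a => //; apply/seteqP; split=> z /=; last by move=> za; split; rewrite za.
  by move=> [_ phiz]; apply: phi_inj; rewrite ?inE // phiz.
have mH i : measurable (H i).
  by case: (HE i) => [->|[a _ ->]]; [exact: measurable0|exact: measurable_coord].
have H_disj : trivIset setT H by move=> i j _ _ [z [[_ <-] [_ <-]]].
rewrite setDE; have -> : ~` [set z : seqSpace L | z n = a0] = \bigcup_i H i.
  by apply/seteqP; split=> [z za0|z [i _ []//]]; exists (phi (z n)).
rewrite setI_bigcupr !measure_bigcup //; last first.
- by move=> i j _ _ [z [[_ Hiz] [_ Hjz]]]; apply: H_disj => //; exists z.
- by move=> i _; apply: measurableI.
rewrite -nneseriesZl; last by move=> i _; apply: measure_ge0.
apply: lee_nneseries => [i _ _|i _]; first exact: measure_ge0.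
by case: (HE i) => [->|[a a_a0 ->]]; [rewrite setI0 measure0 mule0|exact: Ec].
Qed.

Lemma exists_cyl_at_gt_prod K f (b : nat -> L) :
  (forall b', fine (mu (cyl_at K f b')) = \prod_(i < K) mu1 (b' i)) ->
  fine (mu (cyl_at K.+1 f b)) != \prod_(i < K.+1) mu1 (b i) ->
  exists b' : nat -> L, \prod_(i < K.+1) mu1 (b' i) < fine (mu (cyl_at K.+1 f b')).
Proof.
move=> indepK b_neq; apply: contrapT => /forallNP none.
(* Every one-letter extension of E has measure at most its product, strictly so for the
   letter b K; summing over the last letter would give mu E < product. *)
set E := cyl_at K f b; set pE := \prod_(i < K) mu1 (b i).
pose G a : set (seqSpace L) := [set z | z (f K) = a].
have mE : measurable E := measurable_cyl_at _ _ _.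
have mG a : measurable (G a) := measurable_coord _ _.
have muG a : fine (mu (G a)) = mu1 a.
  rewrite -(mu_cyl_at1 (fun _ => f K) (fun _ => a)); congr (fine (mu _)).
  by apply/seteqP; split=> z /= => [za i _ //|/(_ 0%N isT)].
have EG_le a : fine (mu (E `&` G a)) <= pE * mu1 a.
  pose b' i := if i == K then a else b i.
  have -> : E `&` G a = cyl_at K.+1 f b'.
    rewrite cyl_atS /b' eqxx; congr (_ `&` _).
    by apply: eq_cyl_at => // i; rewrite inE => /ltn_eqF ->.
  have -> : pE * mu1 a = \prod_(i < K.+1) mu1 (b' i).
    rewrite big_ord_recr /= /b' eqxx; congr (_ * _).
    by apply: eq_bigr => i _; rewrite (ltn_eqF (ltn_ord i)).
  by rewrite leNgt; apply/negP/none.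
have EG_lt : fine (mu (E `&` G (b K))) < pE * mu1 (b K).
  rewrite lt_neqAle EG_le andbT.
  have -> : pE * mu1 (b K) = \prod_(i < K.+1) mu1 (b i) by rewrite big_ord_recr.
  by rewrite /E /G -cyl_atS.
have EGC_le : (mu (E `\` G (b K)) <= pE%:E * mu (~` G (b K)))%E.
  apply: measure_coordC_le => // [|a _]; first exact/prodr_ge0/(fun i _ => mu1_ge0 _).
  rewrite -(probability_fineK (measurableI _ _ mE (mG a))) -(probability_fineK (mG a)).
  by rewrite -EFinM lee_fin muG EG_le.
have split_E : mu E = (mu (E `\` G (b K)) + mu (E `&` G (b K)))%E.
  exact: measureDI.
have GC : mu (~` G (b K)) = (1 - mu (G (b K)))%E by rewrite probability_setC.
move: split_E EGC_le; rewrite GC.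
rewrite -[mu E](probability_fineK mE) -[mu (G _)](probability_fineK (mG (b K))).
rewrite -[mu (E `\` G (b K))](probability_fineK (measurableD mE (mG (b K)))).
rewrite -[mu (E `&` G (b K))](probability_fineK (measurableI _ _ mE (mG (b K)))) muG.
rewrite -EFinB -EFinM -EFinD lee_fin => split_E EGC_le.
have E_prod : fine (mu E) = pE := indepK b.
have := EFin_inj split_E; rewrite E_prod; lra.
Qed.

Lemma least_dependent_cyl_at : ~ bernoulli_measure mu ->
  exists k f (b : nat -> L), [/\ (2 <= k)%N, {in gtn k &, {homo f : i j / (i < j)%N}},
    \prod_(i < k) mu1 (b i) < fine (mu (cyl_at k f b)) & indep_below k].
Proof.
move=> /existsNP [s s_dep].
pose dependent k := `[< exists f (b : nat -> L), {in gtn k &, {homo f : i j / (i < j)%N}} /\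
  fine (mu (cyl_at k f b)) <> \prod_(i < k) mu1 (b i) >].
have ex_dep : exists k, dependent k.
  exists (size s); apply/asboolP; exists id, (nth point s); split => //.
  by rewrite -cyl_as_cyl_at; move: s_dep; rewrite (big_nth point) big_mkord.
case: (ex_minnP ex_dep) => k /asboolP [f [b [f_homo dep_k]]] k_min.
have indep : indep_below k.
  move=> K f' b' Kk f'_homo; apply: contrapT => dep.
  have := k_min K (asboolT (ex_intro _ f' (ex_intro _ b' (conj f'_homo dep)))).
  by rewrite leqNgt Kk.
case: k f b f_homo dep_k {k_min ex_dep} indep => [|[|K]] f b f_homo dep_k indep.
- by rewrite cyl_at0 probability_setT big_ord0 in dep_k.
- by rewrite mu_cyl_at1 big_ord1 in dep_k.
have f_homo' : {in gtn K.+1 &, {homo f : i j / (i < j)%N}}.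
  by apply: sub_in2 f_homo => i; rewrite !inE => /ltnW.
have [b' b'_gt] := exists_cyl_at_gt_prod (fun b' => indep K.+1 f b' (ltnSn _) f_homo')
  (introN eqP dep_k).
by exists K.+2, f, b'.
Qed.

End ShiftInvariant.

Section Mixing.
Hypothesis mu_mix : mixing_all_orders mu.

Lemma gcyl_mixing K (B : seq L) (S : pred nat) (r : seq nat) :
  size B = K.+1 -> indep_below K.+1 -> (exists2 j, (j < K)%N & S j) ->
  forall eps : R, 0 < eps -> exists N, forall q : seq nat,
    (forall j, (j < K)%N -> S j -> (N + nth 0%N r j <= nth 0%N q j)%N) ->
    (forall j, (j < K)%N -> ~~ S j -> nth 0%N q j = nth 0%N r j) ->
    `|fine (mu (gcyl B q)) - \prod_(i < K.+1) mu1 (nth point B i)| < eps.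
Proof.
move=> BK indep [j0 j0K Sj0] eps eps_gt0.
(* The blocks of B cut at the gaps in S are the cylinders A c (positions as in r); q
   moves them apart by at least N, so mixing applies, and each block, having fewer than
   K.+1 letters, has product measure. *)
pose m := block S K.
have m_gt0 : (0 < m)%N by apply: leq_trans (block_homo S j0K); rewrite blockS Sj0 addn1.
have block_le i : (i < K.+1)%N -> (block S i < m.+1)%N by rewrite !ltnS => /(block_homo S).
pose A c := cyl_at_pred K.+1 (fun i => block S i == c) (gpos r) (nth point B).
have [N mixN] := mu_mix (fun c (_ : (c <= m)%N) => measurable_cyl_at_pred K.+1
  (fun i => block S i == c) (gpos r) (nth point B)) eps_gt0.
exists N => q q_grow q_frozen.
pose d j := (nth 0%N q j - nth 0%N r j)%N.
have qE j : (j < K)%N -> nth 0%N q j = (nth 0%N r j + d j)%N.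
  move=> jK; rewrite /d; case: (boolP (S j)) => [/(q_grow j jK)|/(q_frozen j jK)->]; lia.
have gpos_q i : (i <= K)%N -> gpos q i = (gpos r i + block_offset S K d (block S i))%N.
  move=> iK; rewrite /gpos -sum_block_offset // => [|j jK nSj]; last first.
    by rewrite /d q_frozen ?subnn.
  rewrite -addnA -big_split; congr (_ + _)%N; apply: eq_bigr => j _.
  by apply: qE; apply: leq_trans iK.
have -> : gcyl B q = \bigcap_(c in `I_m.+1) shiftn (\sum_(b < c) block_gap S K d b) @^-1` A c.
  rewrite gcyl_as_cyl_at BK; apply/seteqP; split=> z /=.
    by move=> zq c _ i iK /eqP <-; rewrite /shiftn sum_block_gap -gpos_q ?zq.
  move=> zA i iK; have := zA (block S i) (block_le i iK) i iK (eqxx _).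
  by rewrite /shiftn sum_block_gap gpos_q.
have -> : \prod_(i < K.+1) mu1 (nth point B i) = \prod_(c < m.+1) fine (mu (A c)).
  rewrite -(prod_partition (fun i => mu1 (nth point B i)) block_le); apply: eq_bigr => c _.
  have [x [b [x_homo cylE prodE _]]] := @cyl_at_pred_compress L R K.+1
    (fun i => block S i == c) (gpos r) (nth point B) (in2W (gpos_homo r)).
  rewrite /A cylE indep ?(prodE mu1) //; apply: (@sum_pred_lt _ (fun i => block S i == c)).
  have [->|c_gt0] := posnP c; first by exists K; rewrite // -lt0n.
  by exists 0%N; rewrite // block0 eq_sym -lt0n.
apply: mixN => c cm; apply: leq_block_gap => // j jK Sj.
by have := q_grow j jK Sj; rewrite /d; lia.
Qed.

Lemma exists_locally_maximal_gaps K (B : seq L) (p : seq nat) :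
  size B = K.+1 -> size p = K -> indep_below K.+1 ->
  \prod_(i < K.+1) mu1 (nth point B i) < fine (mu (gcyl B p)) ->
  exists p0, size p0 = K /\
    forall q, size q = K -> vprec p0 q -> (mu (gcyl B q) < mu (gcyl B p0))%E.
Proof.
move=> BK pK indep prod_lt; apply: contrapT => /forallNP no_max.
have mgcyl q : measurable (gcyl B q) by rewrite gcyl_as_cyl_at; apply: measurable_cyl_at.
pose g q := fine (mu (gcyl B q)).
have next p0 : size p0 = K -> exists q, [/\ size q = K, vprec p0 q & (g p0 <= g q)%O].
  move=> p0K; apply: contrapT => none; apply: (no_max p0); split => // q qK p0q.
  rewrite -(probability_fineK (mgcyl q)) -(probability_fineK (mgcyl p0)) lte_fin ltNge.
  by apply/negP => le; apply: none; exists q.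
have [t [tK tt g_t]] := vprec_chain pK next.
have [n0 [S [S_ex frozen grows]]] := vprec_chain_split tK tt.
have eps_gt0 : 0 < g p - \prod_(i < K.+1) mu1 (nth point B i) by rewrite subr_gt0.
have [N close] := gcyl_mixing (t n0) BK indep S_ex eps_gt0.
have [n n0n grow] := grows N.
have := close (t n) grow (fun j jK nSj => frozen j n jK nSj n0n).
have := g_t n; have := ler_norm (g (t n) - \prod_(i < K.+1) mu1 (nth point B i)).
rewrite /g; lra.
Qed.

End Mixing.
End Measure.

Theorem mainTheorem9 (R : realType) (L : pointedType)
  (hL : countable [set: L]) (mu : probability (seqSpace L) R) :
  shift_invariant mu -> mixing_all_orders mu -> ~ bernoulli_measure mu ->
  exists (k : nat) (B : seq L) (p0 : seq nat),
    [/\ (2 <= k)%N, size B = k, size p0 = k.-1 &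
      forall q : seq nat, size q = k.-1 -> vprec p0 q ->
        (mu (gcyl B q) < mu (gcyl B p0))%E].
Proof.
move=> mu_shift mu_mix not_bernoulli.
have [[|k] [f [b [k_ge2 f_homo prod_lt indep]]]] :=
  least_dependent_cyl_at mu_shift hL not_bernoulli; first by [].
pose B := mkseq b k.+1; pose p := mkseq (fun j => f j.+1 - f j - 1)%N k.
have mu_p : fine (mu (gcyl B p)) = fine (mu (cyl_at k.+1 f b)).
  rewrite -(gcyl_gaps b f_homo) shiftn_invariant //.
  by rewrite gcyl_as_cyl_at; apply: measurable_cyl_at.
have prod_B : \prod_(i < k.+1) mu1 mu (nth point B i) = \prod_(i < k.+1) mu1 mu (b i).
  by apply: eq_bigr => i _; rewrite nth_mkseq.
have [|p0 [p0k p0_max]] :=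
  @exists_locally_maximal_gaps R L mu mu_mix k B p (size_mkseq _ _) (size_mkseq _ _) indep.
  by rewrite prod_B mu_p.
by exists k.+1, B, p0; rewrite size_mkseq.
Qed.
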